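(* Let $\rho\ge 0$ and let $t=(\sqrt{1+8\rho}-1)/(2\rho)$ if $\rho>0$ and $t=2$ if $\rho=0$. Consider the two-dimensional Poisson regression model with interaction at $\boldsymbol{\beta}=(0,-1,-1,-\rho)^\top$ on $\mathcal{X}=[0,\infty)^2$, and let $\xi_t$ be the design assigning equal weights $1/4$ to $(0,0)$, $(2,0)$, $(0,2)$ and $(t,t)$. Then $d((x,x);\xi_t)\le 0$ for all $x\ge 0$.
   Context: In the model, an observation at setting $\mathbf{x}=(x_1,x_2)$ is Poisson distributed with mean $\lambda(\mathbf{x})=\exp(\mathbf{f}(\mathbf{x})^\top\boldsymbol{\beta})=\exp(-x_1-x_2-\rho x_1x_2)$, where $\mathbf{f}(\mathbf{x})=(1,x_1,x_2,x_1x_2)^\top$. For a design $\xi$ with settings $\mathbf{x}_i$ and weights $w_i$ (nonnegative, summing to $1$), the information matrix is $\mathbf{M}(\xi)=\sum_i w_i\lambda(\mathbf{x}_i)\mathbf{f}(\mathbf{x}_i)\mathbf{f}(\mathbf{x}_i)^\top$, and the deduced sensitivity function is $d(\mathbf{x};\xi)=\mathbf{f}(\mathbf{x})^\top\mathbf{M}(\xi)^{-1}\mathbf{f}(\mathbf{x})/p-1/\lambda(\mathbf{x})$ with $p=4$. *)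

From HB Require Import structures.
From mathcomp Require Import all_boot all_order all_algebra.
From mathcomp Require Import all_classical all_reals all_analysis.
Set Implicit Arguments. Unset Strict Implicit. Unset Printing Implicit Defensive.
Import Order.TTheory GRing.Theory Num.Theory.
Local Open Scope ring_scope.

Section PoissonModel.
Variable R : realType.

(* mean lambda(x) = exp(f(x)^T beta), beta = (0,-1,-1,-rho) *)
Definition lam (rho : R) (x : R * R) : R :=
  expR (- x.1 - x.2 - rho * x.1 * x.2).

Definition fvec (x : R * R) : 'cV[R]_4 :=
  \col_(i < 4) [:: 1; x.1; x.2; x.1 * x.2]`_i.

(* a design is a list of (support point, weight) pairs *)
Definition infoM (rho : R) (xi : seq ((R * R) * R)) : 'M[R]_4 :=
  \sum_(p <- xi) (p.2 * lam rho p.1) *: (fvec p.1 *m (fvec p.1)^T).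

(* deduced sensitivity function, p = 4 *)
Definition sens (rho : R) (xi : seq ((R * R) * R)) (x : R * R) : R :=
  ((fvec x)^T *m invmx (infoM rho xi) *m fvec x) 0 0 / 4%:R - (lam rho x)^-1.

Definition tval (rho : R) : R :=
  if rho == 0 then 2 else (Num.sqrt (1 + 8%:R * rho) - 1) / (2 * rho).

Definition xi_t (rho : R) : seq ((R * R) * R) :=
  let t := tval rho in
  [:: ((0, 0), 1 / 4%:R); ((2, 0), 1 / 4%:R); ((0, 2), 1 / 4%:R); ((t, t), 1 / 4%:R)].

End PoissonModel.

From Pilot Require Import Defs.
From HB Require Import structures.
From mathcomp Require Import all_boot all_order all_algebra.
From mathcomp Require Import all_classical all_reals all_analysis.
From mathcomp Require Import ring lra.
Set Implicit Arguments. Unset Strict Implicit. Unset Printing Implicit Defensive.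
Import Order.TTheory GRing.Theory Num.Theory.
Local Open Scope ring_scope.

(* The four support points of xi_t are as many as the regression functions, so
   the design matrix F (rows f(x_k)^T) is invertible and
   M(xi_t)^-1 = G W^-1 G^T, where W = diag(w_k lam(x_k)) and the columns of
   G = F^-1 are the coefficients of the Lagrange polynomials l_k of the support
   points.  Hence d(x; xi_t) = sum_k l_k(x)^2 / lam(x_k) - 1 / lam(x).  On the
   diagonal x = (t u, t u) the relation rho t^2 = 2 - t makes every exponent
   explicit, and d <= 0 becomes
     (1 - t u (1 - u) - u^2)^2 + e^2 (t u (1 - u))^2 / 2 + e^(t+2) u^4
       <= exp(2 t u + (2 - t) u^2).
   For u <= 1 the first two terms are at most (1 - u^2)^2 exp(t u (2 - u)) and
   the last one at most u^4 exp(2 t u + (2 - t) u^2 + 4 (1 - u)); the bounds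
   (1 + y)^n <= e^(n y) then reduce the claim to a polynomial inequality.  For
   u >= 1 the three terms are bounded by e^(t+2) times parts of the Taylor
   polynomial of order 4 of exp(4 (u - 1)). *)

Section ExpBounds.
Variable R : realType.
Implicit Types x y : R.

Lemma exp_partial_sum_le_expR x n : 0 <= x ->
  \sum_(i < n) x ^+ i / (i`!)%:R <= expR x.
Proof.
move=> x0; have := nondecreasing_cvgn_le _ (is_cvg_series_exp_coeff x) n.
rewrite /series /= big_mkord; apply.
by apply: nondecreasing_series => k _ _; exact: exp_coeff_ge0.
Qed.

Lemma taylor2_le_expR x : 0 <= x -> 1 + x + x ^+ 2 / 2 <= expR x.
Proof.
move=> x0; apply: le_trans (exp_partial_sum_le_expR 3 x0).
by rewrite !big_ord_recr big_ord0 /= !factS fact0 expr0 expr1; lra.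
Qed.

Lemma taylor4_le_expR x : 0 <= x ->
  1 + x + x ^+ 2 / 2 + x ^+ 3 / 6 + x ^+ 4 / 24 <= expR x.
Proof.
move=> x0; apply: le_trans (exp_partial_sum_le_expR 5 x0).
by rewrite !big_ord_recr big_ord0 /= !factS fact0 expr0 expr1; lra.
Qed.

Lemma pow1D_le_expR y n : 0 <= 1 + y -> (1 + y) ^+ n <= expR (n%:R * y).
Proof.
by move=> y1; rewrite expRM_natl lerXn2r ?nnegrE ?expR_ge0 ?expR_ge1Dx.
Qed.

Lemma pow1D_mul_expRN_le1 y n : 0 <= 1 + y ->
  expR (- (n%:R * y)) * (1 + y) ^+ n <= 1.
Proof.
move=> y1; rewrite -[leRHS](expRxMexpNx_1 (n%:R * y)) mulrC.
by apply: ler_wpM2r; [exact: expR_ge0 | exact: pow1D_le_expR].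
Qed.

Lemma five_le_expR2 : 5 <= expR (2 : R).
Proof. by apply: le_trans (taylor2_le_expR (ler0n _ 2)); lra. Qed.

(* [(4/3)^8 < 10] and [(3/4)^8 <= expR (-2)]. *)
Lemma expR2_le_ten : expR (2 : R) <= 10.
Proof.
have := @pow1D_mul_expRN_le1 (-1/4) 8 ltac:(lra).
rewrite (_ : - (8%:R * (-1/4)) = 2 :> R); last by field.
rewrite (_ : 1 + -1/4 = 3/4 :> R); last by field.
have := expR_gt0 (2 : R); nra.
Qed.

Lemma sqr_le_expR x : 0 <= x -> x <= 2 -> x ^+ 2 <= expR x.
Proof. by move=> x0 x2; apply: le_trans (taylor2_le_expR x0); nra. Qed.

End ExpBounds.

Section PolynomialBounds.
Variable R : realFieldType.
Implicit Types k t u s A B : R.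

(* The difference of the two sides is [t u (a + t b)], affine in [t] and
   nonnegative at [t = 0] and at [t = 2]. *)
Lemma quadratic_le_taylor2_bound k t u :
  0 <= k <= 5 -> 0 <= t <= 2 -> 0 <= u <= 1 ->
  (1 + u - t * u) ^+ 2 + k * t ^+ 2 * u ^+ 2 <=
  (1 + u) ^+ 2 * (1 + t * (u * (2 - u)) + (t * (u * (2 - u))) ^+ 2 / 2).
Proof.
move=> /andP[k0 k5] /andP[t0 t2] /andP[u0 u1].
pose a := (1 + u) ^+ 2 * (2 - u) + 2 * (1 + u).
pose b := (1 + u) ^+ 2 * u * (2 - u) ^+ 2 / 2 - u * (1 + k).
have a_ge0 : 0 <= a by rewrite /a; nra.
have a2b_ge0 : 0 <= a + 2 * b.
  have -> : a + 2 * b =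
      (1 - u) * (4 + u + 5 * u ^+ 2 + u ^+ 3 - u ^+ 4) + 2 * u * (5 - k).
    by rewrite /a /b; field.
  have : u ^+ 4 <= 1 by rewrite exprn_ile1.
  have := exprn_ge0 2 u0; have := exprn_ge0 3 u0; nra.
have atb_ge0 : 0 <= a + t * b.
  have -> : a + t * b = (1 - t / 2) * a + (t / 2) * (a + 2 * b) by field.
  by apply: addr_ge0; apply: mulr_ge0 => //; lra.
rewrite -subr_ge0; have -> : (1 + u) ^+ 2 *
    (1 + t * (u * (2 - u)) + (t * (u * (2 - u))) ^+ 2 / 2) -
    ((1 + u - t * u) ^+ 2 + k * t ^+ 2 * u ^+ 2) = t * u * (a + t * b).
  by rewrite /a /b; field.
by rewrite !mulr_ge0.
Qed.

(* The key estimate is [u (1 + u^2) <= 2 ((1 + u) / 2)^4], and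
   [(1 + u^2)^2 = (1 - u^2)^2 + 4 u^2]. *)
Lemma convex_weights_le1 u A B : 0 <= u <= 1 -> 0 <= A -> 0 <= B ->
  A * (1 + u ^+ 2) ^+ 2 <= 1 -> B * ((1 + u) / 2) ^+ 8 <= 1 ->
  (1 - u ^+ 2) ^+ 2 * A + u ^+ 4 * B <= 1.
Proof.
move=> /andP[u0 u1] A0 B0 hA hB.
set Q := (1 + u ^+ 2) ^+ 2; set P := ((1 + u) / 2) ^+ 8.
have Q_gt0 : 0 < Q by rewrite exprn_gt0 //; nra.
have P_gt0 : 0 < P by rewrite exprn_gt0 //; lra.
have AQ : A <= Q^-1 by rewrite -(ler_pM2r Q_gt0) mulVf ?gt_eqF.
have BP : B <= P^-1 by rewrite -(ler_pM2r P_gt0) mulVf ?gt_eqF.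
have mid : 0 <= u * (1 + u ^+ 2) <= 2 * ((1 + u) / 2) ^+ 4.
  apply/andP; split; first by rewrite mulr_ge0 //; nra.
  rewrite -subr_ge0; have -> : 2 * ((1 + u) / 2) ^+ 4 - u * (1 + u ^+ 2) =
      (1 - u) ^+ 4 / 8 by field.
  by rewrite divr_ge0 // exprn_ge0 //; lra.
have u4Q : u ^+ 4 * Q <= 4 * u ^+ 2 * P.
  have -> : u ^+ 4 * Q = u ^+ 2 * (u * (1 + u ^+ 2)) ^+ 2 by rewrite /Q; ring.
  have -> : 4 * u ^+ 2 * P = u ^+ 2 * (2 * ((1 + u) / 2) ^+ 4) ^+ 2.
    by rewrite /P; field.
  case/andP: mid => m0 m1.
  by rewrite ler_wpM2l ?exprn_ge0 // lerXn2r ?nnegrE //; lra.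
apply: le_trans (_ : (1 - u ^+ 2) ^+ 2 * Q^-1 + u ^+ 4 * P^-1 <= 1).
  by apply: lerD; apply: ler_wpM2l => //; [exact: sqr_ge0 | exact: exprn_ge0].
have -> : (1 - u ^+ 2) ^+ 2 * Q^-1 + u ^+ 4 * P^-1 =
    ((1 - u ^+ 2) ^+ 2 * P + u ^+ 4 * Q) / (Q * P).
  by field; rewrite !gt_eqF.
rewrite ler_pdivrMr; last exact: mulr_gt0.
have -> : Q * P = (1 - u ^+ 2) ^+ 2 * P + 4 * u ^+ 2 * P by rewrite /Q; ring.
by rewrite mul1r lerD2l.
Qed.

Lemma quartic_le_taylor4 s : 0 <= s ->
  (s * (2 + s)) ^+ 2 / 5 + ((1 + s) * s) ^+ 2 / 2 + (1 + s) ^+ 4 <=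
  1 + 4 * s + (4 * s) ^+ 2 / 2 + (4 * s) ^+ 3 / 6 + (4 * s) ^+ 4 / 24.
Proof.
move=> s0; rewrite -subr_ge0.
have -> : 1 + 4 * s + (4 * s) ^+ 2 / 2 + (4 * s) ^+ 3 / 6 + (4 * s) ^+ 4 / 24 -
    ((s * (2 + s)) ^+ 2 / 5 + ((1 + s) * s) ^+ 2 / 2 + (1 + s) ^+ 4) =
    s ^+ 2 * (7 / 10 + 73 / 15 * s + 269 / 30 * s ^+ 2) by field.
by rewrite mulr_ge0 ?sqr_ge0 //; nra.
Qed.

End PolynomialBounds.

Section DiagonalVariance.
Variable R : realType.
Implicit Types t u : R.

(* [f(x)^T M(xi_t)^-1 f(x) / 4] at [x = (t u, t u)]: the squares of the Lagrange
   polynomials of the support points, weighted by the inverse means there. *)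
Definition diag_variance t u : R :=
  (1 - t * u * (1 - u) - u ^+ 2) ^+ 2 + 2 * (t * u * (1 - u) / 2) ^+ 2 * expR 2
  + u ^+ 4 * expR (t + 2).

Lemma diag_variance_le_expR_small t u : 0 <= t <= 2 -> 0 <= u <= 1 ->
  diag_variance t u <= expR (2 * t * u + (2 - t) * u ^+ 2).
Proof.
move=> /andP[t0 t2] /andP[u0 u1].
have e2_le10 := @expR2_le_ten R.
set X := expR _; have X_ge0 : 0 <= X := expR_ge0 _.
set A := expR (- (2 * u ^+ 2)); set B := expR (4 * (1 - u)).
have A_ge0 : 0 <= A := expR_ge0 _; have B_ge0 : 0 <= B := expR_ge0 _.
have hA : A * (1 + u ^+ 2) ^+ 2 <= 1.
  have -> : A = expR (- (2%:R * u ^+ 2)) by congr expR; ring.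
  by apply: pow1D_mul_expRN_le1; rewrite addr_ge0 ?sqr_ge0.
have hB : B * ((1 + u) / 2) ^+ 8 <= 1.
  have -> : B = expR (- (8%:R * (- (1 - u) / 2))) by congr expR; field.
  have -> : (1 + u) / 2 = 1 + - (1 - u) / 2 by field.
  by apply: pow1D_mul_expRN_le1; lra.
have head_terms : (1 - t * u * (1 - u) - u ^+ 2) ^+ 2
    + 2 * (t * u * (1 - u) / 2) ^+ 2 * expR 2 <= (1 - u ^+ 2) ^+ 2 * (X * A).
  have -> : X * A = expR (t * (u * (2 - u))) by rewrite -expRD; congr expR; ring.
  have -> : (1 - t * u * (1 - u) - u ^+ 2) ^+ 2
      + 2 * (t * u * (1 - u) / 2) ^+ 2 * expR 2 =
      (1 - u) ^+ 2 * ((1 + u - t * u) ^+ 2 + expR 2 / 2 * t ^+ 2 * u ^+ 2).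
    by field.
  rewrite (_ : (1 - u ^+ 2) ^+ 2 * _ =
    (1 - u) ^+ 2 * ((1 + u) ^+ 2 * expR (t * (u * (2 - u))))); last by ring.
  apply: ler_wpM2l; first exact: sqr_ge0.
  apply: le_trans (quadratic_le_taylor2_bound _ _ _) _; rewrite ?t0 ?t2 ?u0 ?u1 //.
    by rewrite divr_ge0 ?expR_ge0 //=; lra.
  apply: ler_wpM2l; first exact: sqr_ge0.
  by apply: taylor2_le_expR; rewrite !mulr_ge0 //; lra.
have last_term : expR (t + 2) <= X * B.
  rewrite -expRD ler_expR -subr_ge0.
  have -> : 2 * t * u + (2 - t) * u ^+ 2 + 4 * (1 - u) - (t + 2) =
      (1 - u) ^+ 2 * (2 - t) by ring.
  by rewrite mulr_ge0 ?sqr_ge0 //; lra.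
have := convex_weights_le1 (_ : 0 <= u <= 1) A_ge0 B_ge0 hA hB.
rewrite u0 u1 => /(_ isT) weights.
apply: le_trans (_ : _ <= (1 - u ^+ 2) ^+ 2 * (X * A) + u ^+ 4 * (X * B)) _.
  by apply: lerD => //; apply: ler_wpM2l; rewrite ?exprn_ge0.
have -> : (1 - u ^+ 2) ^+ 2 * (X * A) + u ^+ 4 * (X * B) =
    X * ((1 - u ^+ 2) ^+ 2 * A + u ^+ 4 * B) by ring.
by rewrite -[leRHS]mulr1; apply: ler_wpM2l.
Qed.

Lemma diag_variance_le_expR_large t u : 0 <= t <= 2 -> 1 <= u ->
  diag_variance t u <= expR (2 * t * u + (2 - t) * u ^+ 2).
Proof.
move=> /andP[t0 t2] u1; set s := u - 1; have s0 : 0 <= s by rewrite subr_ge0.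
have e2_ge5 := @five_le_expR2 R.
set K := expR (t + 2).
have K_ge5 : 5 <= K.
  by apply: le_trans e2_ge5 _; rewrite ler_expR; lra.
have -> : expR (2 * t * u + (2 - t) * u ^+ 2) = K * expR (4 * s + (2 - t) * s ^+ 2).
  by rewrite -expRD; congr expR; rewrite /s; ring.
have taylor : 1 + 4 * s + (4 * s) ^+ 2 / 2 + (4 * s) ^+ 3 / 6 + (4 * s) ^+ 4 / 24
    <= expR (4 * s + (2 - t) * s ^+ 2).
  apply: le_trans (taylor4_le_expR _) _; first by lra.
  by rewrite ler_expR lerDl mulr_ge0 ?sqr_ge0 //; lra.
have first_term : (1 - t * u * (1 - u) - u ^+ 2) ^+ 2 <= K * ((s * (2 + s)) ^+ 2 / 5).
  have -> : (1 - t * u * (1 - u) - u ^+ 2) ^+ 2 = s ^+ 2 * (1 + u - t * u) ^+ 2.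
    by rewrite /s; ring.
  have -> : K * ((s * (2 + s)) ^+ 2 / 5) = K / 5 * (s ^+ 2 * (1 + u) ^+ 2).
    by rewrite /s; field.
  have : (1 + u - t * u) ^+ 2 <= (1 + u) ^+ 2.
    rewrite -subr_ge0 (_ : _ - _ = t * u * (2 + 2 * u - t * u)); last by ring.
    by rewrite !mulr_ge0 //; nra.
  move=> le_sqr; apply: le_trans (_ : _ <= s ^+ 2 * (1 + u) ^+ 2) _.
    by apply: ler_wpM2l; first exact: sqr_ge0.
  rewrite -[leLHS]mul1r; apply: ler_wpM2r; first by rewrite mulr_ge0 ?sqr_ge0.
  by rewrite ler_pdivlMr //; lra.
have middle_term : 2 * (t * u * (1 - u) / 2) ^+ 2 * expR 2 <= K * (((1 + s) * s) ^+ 2 / 2).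
  have -> : 2 * (t * u * (1 - u) / 2) ^+ 2 * expR 2 =
      t ^+ 2 * expR 2 * (((1 + s) * s) ^+ 2 / 2) by rewrite /s; field.
  apply: ler_wpM2r; first by rewrite divr_ge0 ?sqr_ge0.
  by rewrite /K expRD; apply: ler_wpM2r; [exact: expR_ge0 | exact: sqr_le_expR].
have last_term : u ^+ 4 * K = K * (1 + s) ^+ 4 by rewrite /s; ring.
rewrite /diag_variance -/K last_term.
apply: le_trans (_ : _ <= K * (1 + 4 * s + (4 * s) ^+ 2 / 2 + (4 * s) ^+ 3 / 6
    + (4 * s) ^+ 4 / 24)) _; last by apply: ler_wpM2l => //; lra.
apply: le_trans (_ : _ <= K * ((s * (2 + s)) ^+ 2 / 5 + ((1 + s) * s) ^+ 2 / 2
    + (1 + s) ^+ 4)) _; last by apply: ler_wpM2l; [lra | exact: quartic_le_taylor4].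
by rewrite [leRHS]mulrDr [K * (_ + _)]mulrDr; apply: lerD => //; apply: lerD.
Qed.

Lemma diag_variance_le_expR t u : 0 <= t <= 2 -> 0 <= u ->
  diag_variance t u <= expR (2 * t * u + (2 - t) * u ^+ 2).
Proof.
move=> t02 u0; have [u1 | /ltW u1] := lerP u 1.
- by apply: diag_variance_le_expR_small; rewrite ?u0.
- exact: diag_variance_le_expR_large.
Qed.

End DiagonalVariance.

Section WeightedGram.
Variable K : fieldType.

Lemma invmx_trmx_diag_mx m n (F : 'M[K]_(m, n)) (G : 'M[K]_(n, m)) (d : 'rV[K]_m) :
  F *m G = 1%:M -> G *m F = 1%:M -> (forall k, d 0 k != 0) ->
  invmx (F^T *m diag_mx d *m F) = G *m diag_mx (map_mx GRing.inv d) *m G^T.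
Proof.
move=> FG GF d_neq0.
have dV : diag_mx d *m diag_mx (map_mx GRing.inv d) = 1%:M.
  rewrite mulmx_diag -diag_const_mx; congr diag_mx.
  by apply/rowP => k; rewrite !mxE mulfV.
set A := F^T *m _ *m F; set B := G *m _ *m G^T.
have AB : A *m B = 1%:M.
  rewrite /A /B -!mulmxA (mulmxA F) FG mul1mx (mulmxA (diag_mx d)) dV mul1mx.
  by rewrite -trmx_mul GF trmx1.
have [A_unit _] := mulmx1_unit AB.
by rewrite -[RHS]mul1mx -(mulVmx A_unit) -mulmxA AB mulmx1.
Qed.

Lemma diag_mx_quadE n (v d : 'rV[K]_n) :
  (v *m diag_mx d *m v^T) 0 0 = \sum_j d 0 j * v 0 j ^+ 2.
Proof.
rewrite mul_mx_diag !mxE; apply: eq_bigr => j _.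
by rewrite !mxE; ring.
Qed.

End WeightedGram.

Section Design.
Variable R : realType.
Implicit Types (rho t u : R) (xi : seq ((R * R) * R)).

Definition design_mx xi : 'M[R]_(size xi, 4) :=
  \matrix_(k, j) fvec (nth ((0, 0), 0) xi k).1 j 0.

Definition design_wt rho xi : 'rV[R]_(size xi) :=
  \row_k ((nth ((0, 0), 0) xi k).2 * lam rho (nth ((0, 0), 0) xi k).1).

Lemma infoM_design rho xi :
  infoM rho xi = (design_mx xi)^T *m diag_mx (design_wt rho xi) *m design_mx xi.
Proof.
apply/matrixP => i j; rewrite mul_mx_diag /infoM summxE (big_nth ((0, 0), 0)).
rewrite big_mkord !mxE; apply: eq_bigr => k _.
by rewrite !mxE big_ord1 !mxE; ring.
Qed.

Lemma sens_design_inverse rho xi (x : R * R) (G : 'M[R]_(4, size xi)) :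
  design_mx xi *m G = 1%:M -> G *m design_mx xi = 1%:M ->
  (forall k, design_wt rho xi 0 k != 0) ->
  sens rho xi x =
  (\sum_k ((fvec x)^T *m G) 0 k ^+ 2 / design_wt rho xi 0 k) / 4%:R - (lam rho x)^-1.
Proof.
move=> FG GF wt_neq0; rewrite /sens infoM_design (invmx_trmx_diag_mx FG GF wt_neq0).
rewrite -{2}(trmxK (fvec x)) !mulmxA -mulmxA -trmx_mul diag_mx_quadE.
by congr (_ / _ - _); apply: eq_bigr => k _; rewrite mxE mulrC.
Qed.

Lemma tval_gt0 rho : 0 <= rho -> 0 < Defs.tval rho.
Proof.
rewrite /Defs.tval; case: eqP => [_ _ | /eqP rho_neq0 rho_ge0]; first by [].
have rho_gt0 : 0 < rho by rewrite lt_neqAle eq_sym rho_neq0.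
have r2 : Num.sqrt (1 + 8%:R * rho) ^+ 2 = 1 + 8%:R * rho by rewrite sqr_sqrtr //; lra.
have r_ge0 := sqrtr_ge0 (1 + 8%:R * rho).
by apply: divr_gt0; [rewrite subr_gt0; nra | rewrite mulr_gt0].
Qed.

Lemma mul_tval_sqr rho : 0 <= rho -> rho * Defs.tval rho ^+ 2 = 2 - Defs.tval rho.
Proof.
rewrite /Defs.tval; case: eqP => [-> _ | /eqP rho_neq0 rho_ge0]; first by ring.
have r2 : Num.sqrt (1 + 8%:R * rho) ^+ 2 = 1 + 8%:R * rho by rewrite sqr_sqrtr //; lra.
set r := Num.sqrt _ in r2 *.
have -> : rho * ((r - 1) / (2 * rho)) ^+ 2 = (r ^+ 2 - 2 * r + 1) / (4 * rho).
  by field.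
by rewrite r2; field.
Qed.

Lemma tval_le2 rho : 0 <= rho -> Defs.tval rho <= 2.
Proof.
move=> rho_ge0; rewrite -subr_ge0 -mul_tval_sqr //.
by rewrite mulr_ge0 ?sqr_ge0.
Qed.

Lemma lam_gt0 rho (p : R * R) : 0 < lam rho p.
Proof. exact: expR_gt0. Qed.

Lemma lam_diag rho (x : R) : lam rho (x, x) = expR (- (2 * x + rho * x ^+ 2)).
Proof. by rewrite /lam /=; congr expR; ring. Qed.

(* Column [k] lists the coefficients, in the basis [(1, x1, x2, x1 x2)], of the
   polynomial equal to 1 at the [k]-th support point of [xi_t] and to 0 at the
   others. *)
Definition lagrange_mx t : 'M[R]_4 := \matrix_(i, j)
  nth 0 (nth [::] [:: [:: 1; 0; 0; 0];
                      [:: -1/2; 1/2; 0; 0];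
                      [:: -1/2; 0; 1/2; 0];
                      [:: (t - 1) / t ^+ 2; -1 / (2 * t); -1 / (2 * t); 1 / t ^+ 2]] i) j.

Lemma design_mx_xi_t_lagrange rho : Defs.tval rho != 0 ->
  design_mx (xi_t rho) *m lagrange_mx (Defs.tval rho) = 1%:M.
Proof.
move=> t_neq0; apply/matrixP => i j.
rewrite !mxE !big_ord_recr big_ord0 /= !mxE /=.
by case: i => [[|[|[|[|i]]]] ?] //=; case: j => [[|[|[|[|j]]]] ?] //=; field.
Qed.

Lemma sens_xi_t_diag rho u : 0 <= rho ->
  let t := Defs.tval rho in
  sens rho (xi_t rho) (t * u, t * u) =
  diag_variance t u - expR (2 * t * u + (2 - t) * u ^+ 2).
Proof.
move=> rho_ge0 t; have t_neq0 : t != 0 by rewrite gt_eqF ?tval_gt0.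
have rho_t2 : rho * t ^+ 2 = 2 - t := mul_tval_sqr rho_ge0.
have FG := design_mx_xi_t_lagrange t_neq0.
have wt_neq0 k : design_wt rho (xi_t rho) 0 k != 0.
  rewrite mxE mulf_neq0 // !gt_eqF ?lam_gt0 //.
  by case: k => [[|[|[|[|k]]]] //= _]; rewrite divr_gt0.
have lagrange_diag k : ((fvec (t * u, t * u))^T *m lagrange_mx t) 0 k =
    [:: 1 - t * u * (1 - u) - u ^+ 2; t * u * (1 - u) / 2; t * u * (1 - u) / 2;
        u ^+ 2]`_k.
  rewrite !mxE !big_ord_recr big_ord0 /= !mxE.
  by case: k => [[|[|[|[|k]]]] //= _]; field.
rewrite (sens_design_inverse _ FG (mulmx1C FG) wt_neq0).
rewrite !big_ord_recr big_ord0 /= !lagrange_diag /= !mxE /= -/t.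
have lam_tt : lam rho (t, t) = expR (- (t + 2)).
  by rewrite lam_diag rho_t2; congr expR; ring.
have lam_tu : lam rho (t * u, t * u) = expR (- (2 * t * u + (2 - t) * u ^+ 2)).
  by rewrite lam_diag exprMn [rho * _]mulrA rho_t2; congr expR; ring.
have lam_20 : lam rho (2, 0) = expR (- 2) by rewrite /lam /=; congr expR; ring.
have lam_02 : lam rho (0, 2) = expR (- 2) by rewrite /lam /=; congr expR; ring.
have lam_00 : lam rho (0, 0) = 1 by rewrite /lam /= -expR0; congr expR; ring.
rewrite lam_tt lam_tu lam_20 lam_02 lam_00 !expRN !invrK /diag_variance.
by field; rewrite !gt_eqF ?expR_gt0.
Qed.

End Design.

Theorem lemma4 (R : realType) (rho : R) (hrho : 0 <= rho) (x : R) (hx : 0 <= x) :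
  sens rho (xi_t rho) (x, x) <= 0.
Proof.
have t_gt0 := tval_gt0 hrho; have t_le2 := tval_le2 hrho.
set t := Defs.tval rho in t_gt0 t_le2.
have -> : x = t * (x / t) by field; rewrite gt_eqF.
rewrite sens_xi_t_diag // subr_le0; apply: diag_variance_le_expR.
  by rewrite (ltW t_gt0) t_le2.
by rewrite divr_ge0 // ltW.
Qed.
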